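(* Let $(V,\|\cdot\|)$ be a Banach space. Then $V$ admits exactly one reversible conical bicombing, namely the one given by linear segments, $\sigma(x,y,t)=(1-t)x+ty$.
   Context: A bicombing on a metric space $(X,d)$ is a map $\sigma\colon X\times X\times[0,1]\to X$ such that each $\sigma_{xy}:=\sigma(x,y,\cdot)$ is a geodesic from $x$ to $y$ ($\sigma_{xy}(0)=x$, $\sigma_{xy}(1)=y$, $d(\sigma_{xy}(s),\sigma_{xy}(t))=|s-t|d(x,y)$). It is conical if $d(\sigma_{xy}(t),\sigma_{x'y'}(t))\le(1-t)d(x,x')+t\,d(y,y')$ for all $x,y,x',y'$, $t\in[0,1]$, and reversible if $\sigma_{xy}(t)=\sigma_{yx}(1-t)$ for all $x,y,t$. The Banach space is regarded as a metric space with $d(x,y)=\|x-y\|$. *)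

From HB Require Import structures.
From mathcomp Require Import all_boot all_order all_algebra.
From mathcomp Require Import all_classical all_reals all_analysis.
Set Implicit Arguments. Unset Strict Implicit. Unset Printing Implicit Defensive.
Import Order.TTheory GRing.Theory Num.Theory.
Local Open Scope ring_scope.

(* A Banach space V over the reals R, regarded as a metric space with
   d(x,y) = `|x - y|.  A bicombing is a map sigma : V -> V -> R -> V whose
   values are only relevant for t in [0,1]. *)

Definition in01 {R : realType} (t : R) := 0 <= t <= 1.

Definition is_bicombing {R : realType} {V : normedModType R}
  (sigma : V -> V -> R -> V) : Prop :=
  forall x y : V,
    sigma x y 0 = x /\ sigma x y 1 = y /\
    (forall s t : R, in01 s -> in01 t ->
       `|sigma x y s - sigma x y t| = `|s - t| * `|x - y|).

Definition is_conical {R : realType} {V : normedModType R}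
  (sigma : V -> V -> R -> V) : Prop :=
  forall (x y x' y' : V) (t : R), in01 t ->
    `|sigma x y t - sigma x' y' t| <= (1 - t) * `|x - x'| + t * `|y - y'|.

Definition is_reversible {R : realType} {V : normedModType R}
  (sigma : V -> V -> R -> V) : Prop :=
  forall (x y : V) (t : R), in01 t -> sigma x y t = sigma y x (1 - t).

Definition linear_bicombing {R : realType} {V : normedModType R}
  (x y : V) (t : R) : V := (1 - t) *: x + t *: y.

From HB Require Import structures.
From mathcomp Require Import all_boot all_order all_algebra.
From mathcomp Require Import all_classical all_reals all_analysis.
From mathcomp Require Import ring lra.
Set Implicit Arguments. Unset Strict Implicit. Unset Printing Implicit Defensive.
Import Order.TTheory GRing.Theory Num.Theory.
Local Open Scope ring_scope.

(* Comparing a conical bicombing with the constant geodesic at z gives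
   |sigma x y t - z| <= (1 - t) |x - z| + t |y - z| for every z, and only the
   linear point L = (1 - t) x + t y satisfies all of these inequalities.  Write
   e for the deviation from L and d = x - y.  Testing against z = L - a e - s d
   shows that the convex function s |-> |a e + s d|, whose slopes lie in
   [-|d|, |d|], has second differences at least a |e| - 2 |s| |d| (up to the
   factor a t (1 - t)) at every integer s.  With a = N^2, summing over N
   consecutive integers forces N |e| <= 4 |d| for every N, hence e = 0. *)

Lemma natmul_le_telescope (R : numDomainType) (u : nat -> R) (k : R) (N : nat) :
  (forall j, (j < N)%N -> k <= u j.+1 - u j) -> k *+ N <= u N - u 0%N.
Proof.
move=> step; rewrite -(telescope_sumr _ (leq0n N)) -{1}(subn0 N) -sumr_const_nat.
by apply: ler_sum_nat => j /andP[_ ]; apply: step.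
Qed.

Section LinearBicombing.
Variables (R : realType) (V : normedModType R).

Lemma normr_convex (x y : V) (t : R) : in01 t ->
  `|(1 - t) *: x + t *: y| <= (1 - t) * `|x| + t * `|y|.
Proof.
move=> /andP[t0 t1]; apply: le_trans (ler_normD _ _) _.
by rewrite !normrZ ger0_norm ?subr_ge0 // ger0_norm.
Qed.

Lemma linear_bicombingB (x y : V) (s t : R) :
  linear_bicombing x y s - linear_bicombing x y t = (t - s) *: (x - y).
Proof.
rewrite /linear_bicombing opprD addrACA -!scalerBl scalerBr -scaleNr.
by congr (_ *: _ + _ *: _); ring.
Qed.

Lemma linear_bicombing_is_bicombing : is_bicombing (@linear_bicombing R V).
Proof.
move=> x y; split; [|split].
- by rewrite /linear_bicombing subr0 scale1r scale0r addr0.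
- by rewrite /linear_bicombing subrr scale0r add0r scale1r.
- by move=> s t _ _; rewrite linear_bicombingB normrZ distrC.
Qed.

Lemma linear_bicombing_is_conical : is_conical (@linear_bicombing R V).
Proof.
move=> x y x' y' t t01.
rewrite /linear_bicombing opprD addrACA -!scalerBr.
exact: normr_convex.
Qed.

Lemma linear_bicombing_is_reversible : is_reversible (@linear_bicombing R V).
Proof. by move=> x y t _; rewrite /linear_bicombing addrC subKr. Qed.

End LinearBicombing.

Section DeviationFromLinearPoint.
Variables (R : realType) (V : normedModType R) (t : R) (e d : V).
Hypothesis t01 : in01 t.
Hypothesis conical_at_zero : forall w : V,
  `|e + w| <= (1 - t) * `|t *: d + w| + t * `|(t - 1) *: d + w|.

Let comb (a b : R) : V := a *: e + b *: d.

Let combD a b a' b' : comb a b + comb a' b' = comb (a + a') (b + b').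
Proof. by rewrite /comb !scalerDl addrACA. Qed.

Let combZ k a b : k *: comb a b = comb (k * a) (k * b).
Proof. by rewrite /comb scalerDr !scalerA. Qed.

Let comb0l b : comb 0 b = b *: d.
Proof. by rewrite /comb scale0r add0r. Qed.

Let comb0r a : comb a 0 = a *: e.
Proof. by rewrite /comb scale0r addr0. Qed.

Lemma norm_comb_convex a b b' l : in01 l ->
  `|comb a ((1 - l) * b + l * b')| <= (1 - l) * `|comb a b| + l * `|comb a b'|.
Proof.
suff -> : comb a ((1 - l) * b + l * b') = (1 - l) *: comb a b + l *: comb a b'.
  exact: normr_convex.
by rewrite !combZ combD; congr comb; ring.
Qed.

Lemma norm_comb_lipschitz a s : `| `|comb a (s + 1)| - `|comb a s| | <= `|d|.
Proof.
apply: le_trans (ler_dist_dist _ _) _.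
have -> : comb a (s + 1) = comb a s + comb 0 1 by rewrite combD; congr comb; ring.
by rewrite addrAC subrr add0r comb0l scale1r.
Qed.

Lemma norm_comb_ge a s : 0 <= a -> a * `|e| <= `|comb a s| + `|s| * `|d|.
Proof.
move=> a0; have -> : a * `|e| = `|comb a s - s *: d|.
  by rewrite /comb addrK normrZ ger0_norm.
by rewrite -normrZ ler_normB.
Qed.

Lemma norm_comb_rescale a s : 0 <= a ->
  (1 + a) * `|comb a s| <= a * `|comb (1 + a) s| + `|s| * `|d|.
Proof.
move=> a0; have -> : (1 + a) * `|comb a s| = `|(1 + a) *: comb a s|.
  by rewrite normrZ ger0_norm // addr_ge0.
have -> : (1 + a) *: comb a s = a *: comb (1 + a) s + s *: d.
  by rewrite !combZ -comb0l combD; congr comb; ring.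
by apply: le_trans (ler_normD _ _) _; rewrite !normrZ ger0_norm.
Qed.

Lemma conical_at_comb a s :
  `|comb (1 + a) s| <= (1 - t) * `|comb a (t + s)| + t * `|comb a (t - 1 + s)|.
Proof.
have := conical_at_zero (comb a s).
by rewrite -[e]scale1r -comb0r -!comb0l !combD !(add0r, addr0).
Qed.

Lemma comb_second_difference a s : 0 <= a ->
  a * `|e| - 2 * `|s| * `|d| <=
  a * (t * (1 - t)) * (`|comb a (s - 1)| + `|comb a (s + 1)| - 2 * `|comb a s|).
Proof.
move=> a0; have /andP[t0 t1] := t01.
have conv_right : `|comb a (t + s)| <= (1 - t) * `|comb a s| + t * `|comb a (s + 1)|.
  by rewrite (_ : t + s = (1 - t) * s + t * (s + 1)); [exact: norm_comb_convex|ring].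
have conv_left : `|comb a (t - 1 + s)| <= (1 - t) * `|comb a (s - 1)| + t * `|comb a s|.
  by rewrite (_ : t - 1 + s = (1 - t) * (s - 1) + t * s); [exact: norm_comb_convex|ring].
have upper : `|comb (1 + a) s| <= `|comb a s| +
    t * (1 - t) * (`|comb a (s - 1)| + `|comb a (s + 1)| - 2 * `|comb a s|).
  have := conical_at_comb a s; have t'0 : 0 <= 1 - t by rewrite subr_ge0.
  have := ler_wpM2l t'0 conv_right; have := ler_wpM2l t0 conv_left; lra.
have := ler_wpM2l a0 upper; have := norm_comb_rescale s a0; have := norm_comb_ge s a0.
lra.
Qed.

Lemma natmul_norm_le N : N%:R * `|e| <= 4 * `|d|.
Proof.
have d0 := normr_ge0 d; have /andP[t0 t1] := t01.
have [->|N0] := posnP N; first by rewrite mul0r mulr_ge0.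
pose a : R := N%:R * N%:R; have a0 : 0 <= a by rewrite mulr_ge0.
pose diff j := `|comb a j.+1%:R| - `|comb a j%:R|.
have diff_le j : `|diff j| <= `|d| by rewrite /diff -natr1 norm_comb_lipschitz.
pose slope j := a * (t * (1 - t)) * diff j.
have step j : (j < N)%N -> a * `|e| - 2 * N%:R * `|d| <= slope j.+1 - slope j.
  move=> jN; have := comb_second_difference j.+1%:R a0.
  have -> : j.+1%:R - 1 = j%:R :> R by rewrite -natr1 addrK.
  rewrite natr1 ger0_norm //; have : j.+1%:R <= N%:R :> R by rewrite ler_nat.
  rewrite /slope /diff; nra.
have := natmul_le_telescope step; rewrite -[(_ - _) *+ N]mulr_natl /slope -mulrBr.
have slopes : a * (t * (1 - t)) * (diff N - diff 0%N) <= a * (2 * `|d|).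
  have c0 : 0 <= t * (1 - t) by rewrite mulr_ge0 ?subr_ge0.
  rewrite -mulrA; apply: ler_wpM2l => //.
  apply: le_trans (ler_piMl _ (_ : t * (1 - t) <= 1)); last by nra.
  - apply: ler_wpM2l => //.
    have := diff_le N; have := diff_le 0%N; rewrite !ler_norml => /andP[? _] /andP[_ ?].
    lra.
  - by rewrite mulr_ge0.
move=> tele; have : a * (N%:R * `|e| - 4 * `|d|) <= 0 by move: slopes tele; rewrite /a; lra.
by rewrite pmulr_rle0 ?subr_le0 // mulr_gt0 // ltr0n.
Qed.

Lemma deviation_eq0 : e = 0.
Proof.
have [//|e_neq0] := eqVneq e 0.
have e0 : 0 < `|e| by rewrite normr_gt0.
have bound_ge0 : 0 <= 4 * `|d| / `|e| by rewrite divr_ge0 ?mulr_ge0.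
have := archi_boundP bound_ge0; rewrite ltr_pdivrMr // => lt_bound.
by have := natmul_norm_le (Num.Def.archi_bound (4 * `|d| / `|e|)); rewrite leNgt lt_bound.
Qed.

End DeviationFromLinearPoint.

Section ConicalBicombing.
Variables (R : realType) (V : normedModType R).

Lemma eq_linear_bicombing (x y u : V) (t : R) : in01 t ->
  (forall z, `|u - z| <= (1 - t) * `|x - z| + t * `|y - z|) ->
  u = linear_bicombing x y t.
Proof.
move=> t01 hu; apply/subr0_eq; apply: (deviation_eq0 (d := x - y) t01) => w.
have [lb0 [lb1 _]] := linear_bicombing_is_bicombing x y.
set L := linear_bicombing x y t.
have xL : x - L = t *: (x - y) by rewrite -{1}lb0 linear_bicombingB subr0.
have yL : y - L = (t - 1) *: (x - y) by rewrite -{1}lb1 linear_bicombingB.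
have shift v : v - (L - w) = v - L + w by rewrite opprB addrCA addrC.
by have := hu (L - w); rewrite !shift xL yL.
Qed.

Lemma bicombing_diag (sigma : V -> V -> R -> V) : is_bicombing sigma ->
  forall (z : V) (t : R), in01 t -> sigma z z t = z.
Proof.
move=> hs z t t01; have [z0 [_ dist]] := hs z z.
have in01_0 : in01 (0 : R) by rewrite /in01 lexx ler01.
by have := dist t 0 t01 in01_0; rewrite z0 subrr normr0 mulr0 => /normr0_eq0/subr0_eq.
Qed.

Lemma conical_le_convex_dist (sigma : V -> V -> R -> V) :
  is_bicombing sigma -> is_conical sigma ->
  forall (x y z : V) (t : R), in01 t ->
  `|sigma x y t - z| <= (1 - t) * `|x - z| + t * `|y - z|.
Proof.
move=> hs hc x y z t t01.
by rewrite -{1}(bicombing_diag hs z t01); apply: hc.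
Qed.

End ConicalBicombing.

Theorem corollary1p3 (R : realType) (V : completeNormedModType R) :
  (is_bicombing (@linear_bicombing R V) /\
   is_conical (@linear_bicombing R V) /\
   is_reversible (@linear_bicombing R V)) /\
  (forall sigma : V -> V -> R -> V,
     is_bicombing sigma -> is_conical sigma -> is_reversible sigma ->
     forall (x y : V) (t : R), in01 t -> sigma x y t = linear_bicombing x y t).
Proof.
split.
  split; first exact: linear_bicombing_is_bicombing.
  by split; [exact: linear_bicombing_is_conical | exact: linear_bicombing_is_reversible].
move=> sigma hs hc _ x y t t01.
exact: eq_linear_bicombing t01 (fun z => conical_le_convex_dist hs hc x y z t01).
Qed.
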